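(* For a positive integer $g$, let $t_g$ denote the number of numerical semigroups $\Lambda$ of genus $g$ satisfying $f(\Lambda)<3m(\Lambda)$. Then for every positive integer $g$, \[ t_g \leq F_{g+1} + \sum_{k = 1}^{g-1} \sum_{A \in \mathcal A_k} F_{g - |(A + A)\cap[0, k]| + |A| - k - 1}. \]
   Context: A numerical semigroup is a subset $\Lambda\subseteq\mathbb{N}_0$ closed under addition, containing $0$, with finite complement in $\mathbb{N}_0$. Its genus is $|\mathbb{N}_0\setminus\Lambda|$, its multiplicity $m(\Lambda)$ is its smallest nonzero element and its Frobenius number $f(\Lambda)$ is the largest element of $\mathbb{N}_0\setminus\Lambda$. For integers $a\le b$, $[a,b]=\{a,\dots,b\}$; $A+A=\{a_1+a_2:a_1,a_2\in A\}$. For a positive integer $k$, $\mathcal A_k = \{A \subseteq [0, k-1] : 0 \in A \text{ and } k \notin A + A\}$. $F_n$ are the Fibonacci numbers, $F_1=F_2=1$, $F_{n+2}=F_{n+1}+F_n$, with the convention $F_n=0$ for all $n\le 0$. *)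

From mathcomp Require Import all_boot all_order all_algebra.
Set Implicit Arguments. Unset Strict Implicit. Unset Printing Implicit Defensive.

Definition numerical_semigroup (L : nat -> bool) : Prop :=
  [/\ L 0, (forall a b, L a -> L b -> L (a + b)) & exists N, forall n, N <= n -> L n].

Definition has_genus (L : nat -> bool) (g : nat) : Prop :=
  exists s : seq nat, [/\ uniq s, (forall n, (n \in s) = ~~ L n) & size s = g].

Definition is_multiplicity (L : nat -> bool) (m : nat) : Prop :=
  [/\ 0 < m, L m & forall k, 0 < k < m -> ~~ L k].

Definition is_frobenius (L : nat -> bool) (f : nat) : Prop :=
  ~~ L f /\ forall n, f < n -> L n.

Fixpoint fib (n : nat) : nat :=
  match n with
  | 0 => 0
  | 1 => 1
  | (m.+1 as p).+1 => fib p + fib m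
  end.

(* F_n for integer index, with F_n = 0 for n <= 0 *)
Definition fibz (z : int) : nat :=
  match z with Posz n => fib n | Negz _ => 0 end.

Definition in_sumset (k : nat) (A : {set 'I_k}) (s : nat) : bool :=
  [exists a1 in A, exists a2 in A, (val a1 + val a2 == s)%N].

(* A in cal A_k  (A subset of [0,k-1] encoded as a set of 'I_k) *)
Definition in_calA (k : nat) (A : {set 'I_k}) : bool :=
  [exists a in A, val a == 0%N] && ~~ in_sumset A k.

Definition sumset_card (k : nat) (A : {set 'I_k}) : nat :=
  #|[set s : 'I_k.+1 | in_sumset A (val s)]|.

Definition bound_rhs (g : nat) : nat :=
  (fib g.+1 + \sum_(1 <= k < g) \sum_(A : {set 'I_k} | in_calA A)
     fibz ((g%:Z - (sumset_card A)%:Z + (#|A|)%:Z - k%:Z - 1)%R))%N.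

From mathcomp Require Import all_boot all_order all_algebra.
From mathcomp Require Import zify.
From Stdlib Require Import FunctionalExtensionality ClassicalEpsilon.
Set Implicit Arguments. Unset Strict Implicit. Unset Printing Implicit Defensive.

(* Split the semigroups according to whether [f < 2m] or [2m < f < 3m] ([f = 2m] is
   impossible since [2m] lies in the semigroup).

   If [f < 2m], the gaps are [[1, m)] together with [g - m + 1] of the [m - 1] integers of
   [(m, 2m)], so for each [m] there are at most ['C(m - 1, g - m + 1)] such semigroups, and
   these binomials along an antidiagonal of Pascal's triangle sum to [F_(g+1)].

   If [f = 2m + k] with [0 < k < m], the set [A = {a < k | m + a \in L}] lies in [A_k], and
   [m], [k] and [A] force [m - 1 + (k - |A|) + 2] gaps and leave at most
   [m - 1 - |(A + A) /\ [0, k]|] positions undecided. Choosing the remaining gaps among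
   them and summing over [m] gives again an antidiagonal sum, bounded by the Fibonacci
   number of the statement. *)

Lemma binomial_antidiag_rec M :
  \sum_(i < M.+3) 'C(i, M.+2 - i)
  = \sum_(i < M.+2) 'C(i, M.+1 - i) + \sum_(i < M.+1) 'C(i, M - i).
Proof.
rewrite big_ord_recl bin0n add0n big_ord_recr /= subnn bin0.
rewrite [X in _ = X + _]big_ord_recr /= subnn bin0 addnAC -big_split /=.
congr (_ + _); apply: eq_bigr => i _; have := ltn_ord i.
by rewrite /bump /= add1n subSS => ?; rewrite subSn // binS subSn.
Qed.

Lemma fib_binomial_antidiag M : fib M.+1 = \sum_(i < M.+1) 'C(i, M - i).
Proof.
suff: fib M.+1 = \sum_(i < M.+1) 'C(i, M - i) /\
      fib M.+2 = \sum_(i < M.+2) 'C(i, M.+1 - i) by case.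
elim: M => [|M [IH1 IH2]]; first by split; rewrite ?big_ord_recr ?big_ord0 /=.
by split=> //; rewrite binomial_antidiag_rec -IH1 -IH2.
Qed.

Lemma sum_binomial_antidiag_le_fib M B :
  \sum_(i < B) 'C(i, M - i) * (i <= M) <= fib M.+1.
Proof.
rewrite fib_binomial_antidiag.
rewrite -(big_mkord xpredT (fun i => 'C(i, M - i) * (i <= M))).
rewrite -(big_mkord xpredT (fun i => 'C(i, M - i))).
apply: (@leq_trans (\sum_(0 <= i < M.+1 + B) 'C(i, M - i) * (i <= M))).
  by rewrite [X in _ <= X](big_cat_nat _ (n := B)) ?leq_addr ?leq_addl.
rewrite (big_cat_nat _ (n := M.+1)) ?leq_addr //= [X in _ + X <= _]big1_seq ?addn0; last first.
  move=> i /andP[_]; rewrite mem_index_iota => /andP[hi _].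
  by rewrite leqNgt hi muln0.
by apply: leq_sum => i _; case: (i <= M); rewrite ?muln1 ?muln0.
Qed.

Lemma sum_shift_le (h : nat -> nat) s B :
  \sum_(m < B) (s < m) * h (m.-1 - s) <= \sum_(i < B) h i.
Proof.
elim: s B => [|s IH] [|B]; rewrite ?big_ord0 // big_ord_recl mul0n add0n.
all: rewrite [X in _ <= X]big_ord_recr /=; apply: leq_trans (leq_addr _ _).
  by apply: eq_leq; apply: eq_bigr => i _; rewrite subn0 mul1n.
apply: leq_trans (IH B); apply: eq_leq; apply: eq_bigr => i _.
by rewrite /bump /= add1n ltnS add0n subnS -subn1 subnAC subn1.
Qed.

Lemma sum_class_counts_le_fibz g k a s : a <= k -> s <= k ->
  \sum_(m < g.+2) (k < m) *
      ('C(m.-1 - s, g - (m.-1 + (k - a)).+2) * ((m.-1 + (k - a)).+2 <= g))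
  <= fibz (g%:Z - s%:Z + a%:Z - k%:Z - 1)%R.
Proof.
move=> ak sk; have [small|large] := ltnP (g + a) (k + k + 2).
  rewrite big1 // => m _; have [km|] := ltnP k m; last by rewrite mul0n.
  have -> : ((m.-1 + (k - a)).+2 <= g) = false by lia.
  by rewrite !muln0.
(* The substitution [i = m - 1 - s] turns the summand into ['C(i, M - i)]. *)
pose M := g + a - (s + k + 2).
have -> : (g%:Z - s%:Z + a%:Z - k%:Z - 1 = M.+1%:Z)%R by rewrite /M; lia.
apply: leq_trans (sum_binomial_antidiag_le_fib M g.+2).
apply: leq_trans (sum_shift_le (fun i => 'C(i, M - i) * (i <= M)) s g.+2).
apply: leq_sum => m _; have [km|] := ltnP k m; last by rewrite mul0n.
have [fits|] := boolP ((m.-1 + (k - a)).+2 <= g); last by rewrite muln0.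
have -> : s < m by lia.
have -> : m.-1 - s <= M by rewrite /M; lia.
by have -> : g - (m.-1 + (k - a)).+2 = M - (m.-1 - s) by rewrite /M; lia.
Qed.

Lemma sum_negb k (p : nat -> bool) : \sum_(j < k) ~~ p j = k - \sum_(j < k) p j.
Proof.
suff: \sum_(j < k) ~~ p j + \sum_(j < k) p j = k by lia.
rewrite -big_split (eq_bigr (fun _ => 1)) => [|j _]; last by case: (p j).
by rewrite sum_nat_const card_ord muln1.
Qed.

Lemma sum_bool_le k (p : nat -> bool) : \sum_(j < k) p j <= k.
Proof.
apply: (@leq_trans (\sum_(j < k) 1)); first by apply: leq_sum => j _; apply: leq_b1.
by rewrite sum_nat_const card_ord muln1.
Qed.

Lemma card_sum_fibers (T J : finType) (P : {set T}) (h : T -> J) :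
  #|P| = \sum_(j : J) #|[set x in P | h x == j]|.
Proof.
rewrite -sum1_card (partition_big h xpredT) //=.
by apply: eq_bigr => j _; rewrite -sum1_card; apply: eq_bigl => x; rewrite inE.
Qed.

Lemma card_sum_fibers_nat (T : finType) (P : {set T}) (h : T -> nat) B :
  {in P, forall x, h x < B} ->
  #|P| = \sum_(j < B) #|[set x in P | h x == j]|.
Proof.
move=> hB; rewrite -sum1_card.
under [RHS]eq_bigr => j _ do rewrite -sum1_card.
rewrite (exchange_big_dep (mem P)) /=; last by move=> j x _; rewrite inE => /andP[].
apply: eq_bigr => x xP; rewrite (bigD1 (Ordinal (hB x xP))) /=; last by rewrite inE xP eqxx.
rewrite big1 ?addn0 // => j /andP[]; rewrite inE xP /= => /eqP hx.
by case/eqP; apply: val_inj; rewrite /= hx.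
Qed.

Lemma cardsU_disjoint (T : finType) (A B : {set T}) :
  [disjoint A & B] -> #|A :|: B| = #|A| + #|B|.
Proof. by move=> AB; apply/eqP; rewrite (leq_card_setU A B).2. Qed.

Definition window N a l (p : nat -> bool) : {set 'I_N} :=
  [set x : 'I_N | (a <= x < a + l) && p (x - a)].

Lemma card_window N a l p : a + l <= N -> #|window N a l p| = \sum_(j < l) p j.
Proof.
move=> le_N; pose f (j : 'I_l) := widen_ord le_N (rshift a j).
have -> : window N a l p = f @: [set j : 'I_l | p j].
  apply/setP => x; rewrite inE; apply/andP/imsetP => [[/andP[ax xa] px]|[j]].
    have lt_l : x - a < l by lia.
    by exists (Ordinal lt_l); rewrite ?inE //; apply: val_inj => /=; lia.
  rewrite inE => pj ->; rewrite /= addKn pj; have := ltn_ord j; lia.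
rewrite card_imset; last by move=> j j' /(congr1 val) /addnI; apply: val_inj.
by rewrite -sum1_card big_mkcond; apply: eq_bigr => j _; rewrite inE; case: (p j).
Qed.

Lemma card_window_full N a l : a + l <= N -> #|window N a l xpredT| = l.
Proof. by move=> le_N; rewrite card_window // sum_nat_const card_ord muln1. Qed.

Lemma card_sets_between (I T : finType) (G : I -> {set T}) g (C : {set I})
    (F W : {set T}) :
  injective G -> (forall i, #|G i| = g) -> [disjoint F & W] ->
  (forall i, i \in C -> F \subset G i /\ G i \subset F :|: W) ->
  #|C| <= 'C(#|W|, g - #|F|) * (#|F| <= g).
Proof.
move=> G_inj G_card FW between.
have [->|[i0 i0C]] := set_0Vmem C; first by rewrite cards0.
have -> : #|F| <= g by rewrite -(G_card i0); apply: subset_leq_card; case: (between i0 i0C).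
have splitG i : i \in C -> G i = F :|: (G i :&: W).
  move=> iC; case: (between i iC) => FG GFW.
  by rewrite setUIr (setUidPr FG) (setIidPl GFW).
have card_GW i : i \in C -> #|G i :&: W| = g - #|F|.
  move=> iC; rewrite -(G_card i) {2}(splitG i iC) cardsU_disjoint ?addKn //.
  exact: disjointWr (subsetIr _ _) FW.
rewrite muln1 -(card_in_imset (f := fun i => G i :&: W)); last first.
  by move=> i j iC jC /= e; apply: G_inj; rewrite (splitG i iC) (splitG j jC) e.
rewrite -cards_draws; apply: subset_leq_card; apply/subsetP => Y /imsetP[i iC ->].
by rewrite inE subsetIr card_GW ?eqxx.
Qed.

Definition in_natset k (A : {set 'I_k}) (j : nat) : bool := [exists a in A, val a == j].

Lemma in_natset_ord k (A : {set 'I_k}) (j : 'I_k) : in_natset A j = (j \in A).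
Proof.
apply/existsP/idP => [[a /andP[aA /eqP aj]]|jA]; last by exists j; rewrite jA eqxx.
by rewrite -(val_inj aj).
Qed.

Lemma sum_notin_natset k (A : {set 'I_k}) : \sum_(j < k) ~~ in_natset A j = k - #|A|.
Proof.
have -> : \sum_(j < k) ~~ in_natset A j = #|~: A|.
  rewrite -sum1_card [RHS]big_mkcond /=; apply: eq_bigr => j _.
  by rewrite in_natset_ord inE; case: (j \in A).
by rewrite cardsCs setCK card_ord.
Qed.

Lemma sumset_card_sum k (A : {set 'I_k}) : ~~ in_sumset A k ->
  sumset_card A = \sum_(j < k) in_sumset A j.
Proof.
move=> Ak; rewrite /sumset_card -sum1_card big_mkcond /= big_ord_recr /=.
rewrite inE (negbTE Ak) addn0; apply: eq_bigr => j _; rewrite inE.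
by case: (in_sumset A j).
Qed.

Definition shifted_trace k (L : nat -> bool) m : {set 'I_k} := [set a : 'I_k | L (m + a)].

Lemma in_natset_trace k L m j :
  in_natset (shifted_trace k L m) j = (j < k) && L (m + j).
Proof.
apply/existsP/andP => [[a /andP[aA /eqP <-]]|[jk Lj]].
  by move: aA; rewrite inE ltn_ord.
by exists (Ordinal jk); rewrite inE /= Lj eqxx.
Qed.

Lemma in_sumset_trace k (L : nat -> bool) m j :
  (forall a b, L a -> L b -> L (a + b)) ->
  in_sumset (shifted_trace k L m) j -> L (m + m + j).
Proof.
move=> Ladd /existsP[a1 /andP[a1A /existsP[a2 /andP[a2A /eqP <-]]]].
move: a1A a2A; rewrite !inE => La1 La2; rewrite addnACA; exact: Ladd.
Qed.

Definition gap_set N (L : nat -> bool) : {set 'I_N} := [set x : 'I_N | ~~ L x].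

Lemma card_gap_set L g N : has_genus L g -> (forall x, ~~ L x -> x < N) ->
  #|gap_set N L| = g.
Proof.
move=> [s [s_uniq s_gaps <-]] gap_lt; rewrite cardE -(size_map val).
apply: perm_size; apply: uniq_perm => [||x].
- by rewrite map_inj_uniq ?enum_uniq //; apply: val_inj.
- exact: s_uniq.
rewrite s_gaps; apply/mapP/idP => [[y]|Lx]; first by rewrite mem_enum inE => ? ->.
by exists (Ordinal (gap_lt x Lx)); rewrite ?mem_enum ?inE.
Qed.

Lemma mult_le_genusS L g m : has_genus L g -> is_multiplicity L m -> m <= g.+1.
Proof.
move=> [s [s_uniq s_gaps <-]] [m_gt0 _ below_m].
suff: size (iota 1 m.-1) <= size s by rewrite size_iota; lia.
apply: uniq_leq_size (iota_uniq _ _) _ => x; rewrite mem_iota s_gaps => x_lt.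
by apply: below_m; lia.
Qed.

(* With [f = 2m + k] and [A = shifted_trace k L m], the forced gaps are [[1, m)],
   [m + ([0, k) \ A)], [m + k] (because [m + (m + k) = f]) and [f]; the only other
   possible gaps are [(m + k, 2m)] and [2m + ([0, k) \ (A + A))]. *)
Definition forced_gaps N m k (A : {set 'I_k}) : {set 'I_N} :=
  window N 1 m.-1 xpredT :|: window N m k (fun j => ~~ in_natset A j)
  :|: window N (m + k) 1 xpredT :|: window N (m + m + k) 1 xpredT.

Definition optional_gaps N m k (A : {set 'I_k}) : {set 'I_N} :=
  window N (m + k).+1 (m.-1 - k) xpredT :|: window N (m + m) k (fun j => ~~ in_sumset A j).

Arguments forced_gaps : clear implicits.
Arguments optional_gaps : clear implicits.

Lemma forced_optional_disjoint N m k (A : {set 'I_k}) : k < m ->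
  [disjoint forced_gaps N m k A & optional_gaps N m k A].
Proof.
move=> km; apply/pred0P => x; rewrite /= !inE.
by case: (in_natset _ _); case: (in_sumset _ _); rewrite /=; lia.
Qed.

Lemma card_forced_gaps N m k (A : {set 'I_k}) : 0 < m -> m + m + k < N ->
  #|forced_gaps N m k A| = (m.-1 + (k - #|A|)).+2.
Proof.
move=> m_gt0 lt_N.
rewrite !cardsU_disjoint ?card_window_full ?card_window ?sum_notin_natset; try lia.
all: by apply/pred0P => x; rewrite /= !inE; lia.
Qed.

Lemma card_optional_gaps_le N m k (A : {set 'I_k}) :
  ~~ in_sumset A k -> k < m -> m + m + k <= N ->
  #|optional_gaps N m k A| <= m.-1 - sumset_card A.
Proof.
move=> Ak km le_N; apply: leq_trans (leq_card_setU _ _) _.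
rewrite card_window_full ?card_window ?sum_negb ?sumset_card_sum //; try lia.
have := sum_bool_le k (in_sumset A); lia.
Qed.

Section OneSemigroup.

Variables (N : nat) (L : nat -> bool) (m f : nat).
Hypotheses (L_sg : numerical_semigroup L) (L_mult : is_multiplicity L m)
  (L_frob : is_frobenius L f).

Lemma numerical_semigroup_add a b : L a -> L b -> L (a + b).
Proof. by case: L_sg => _ Ladd _; apply: Ladd. Qed.

Lemma gap_le_frob x : ~~ L x -> x <= f.
Proof. by case: L_frob => _ frob_max Lx; rewrite leqNgt; apply: contra Lx => /frob_max. Qed.

Lemma gap_set_frob_lt_2mult : f < 2 * m ->
  window N 1 m.-1 xpredT \subset gap_set N L /\
  gap_set N L \subset window N 1 m.-1 xpredT :|: window N m.+1 m.-1 xpredT.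
Proof.
case: L_sg L_mult => L0 _ _ [_ Lm below_m] f_lt; split; apply/subsetP => x.
  by rewrite !inE andbT => x_lt; apply: below_m; lia.
rewrite !inE !andbT => Lx; have := gap_le_frob Lx.
have x0 : x != 0 :> nat by apply: contraNneq Lx => ->.
have xm : x != m :> nat by apply: contraNneq Lx => ->.
lia.
Qed.

Lemma shifted_trace_in_calA k : f = m + m + k -> 0 < k ->
  in_calA (shifted_trace k L m).
Proof.
case: L_mult L_frob => _ Lm _ [Lf _] f_eq k_gt0; apply/andP; split.
  by apply/existsP; exists (Ordinal k_gt0); rewrite inE /= addn0 Lm eqxx.
by apply: contra Lf => /(in_sumset_trace numerical_semigroup_add); rewrite f_eq.
Qed.

Lemma forced_gaps_sub k : f = m + m + k -> k < m ->
  forced_gaps N m k (shifted_trace k L m) \subset gap_set N L.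
Proof.
case: L_mult L_frob => _ Lm below_m [Lf _] f_eq km.
have Lmk : ~~ L (m + k).
  by apply: contra Lf => ?; rewrite f_eq -addnA; apply: numerical_semigroup_add.
apply/subsetP => x; rewrite !inE !andbT in_natset_trace.
case/orP => [/orP[/orP[x_lt|/andP[x_in]]|x_eq]|x_eq].
- by apply: below_m; lia.
- by rewrite negb_and => /orP[|]; [lia | rewrite subnKC //; lia].
- by have -> : x = m + k :> nat by lia.
- by have -> : x = f :> nat by lia.
Qed.

Lemma gap_set_sub_forced_optional k : f = m + m + k ->
  gap_set N L \subset forced_gaps N m k (shifted_trace k L m)
                       :|: optional_gaps N m k (shifted_trace k L m).
Proof.
case: L_sg L_mult => L0 _ _ [_ Lm _] f_eq.
apply/subsetP => x; rewrite !inE !andbT in_natset_trace => Lx.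
have := gap_le_frob Lx.
have x0 : x != 0 :> nat by apply: contraNneq Lx => ->.
have xm : x != m :> nat by apply: contraNneq Lx => ->.
have x2m : x != m + m :> nat by apply: contraNneq Lx => ->; apply: numerical_semigroup_add.
have low : L (m + (x - m)) -> x < m.
  by rewrite ltnNge; apply: contraTN => /subnKC ->.
have high : in_sumset (shifted_trace k L m) (x - (m + m)) -> x < m + m.
  rewrite ltnNge; apply: contraTN => /subnKC x_eq.
  by apply/negP => /(in_sumset_trace numerical_semigroup_add); rewrite x_eq; apply/negP.
case: (boolP (L _)) => [/low|_]; case: (boolP (in_sumset _ _)) => [/high|_] /=; lia.
Qed.

End OneSemigroup.

Section SemigroupFamily.

Variables (g n : nat) (S : 'I_n -> nat -> bool) (mu fr : 'I_n -> nat).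
Hypotheses (g_gt0 : 0 < g) (S_inj : injective S)
  (S_sg : forall i, numerical_semigroup (S i)) (S_genus : forall i, has_genus (S i) g)
  (S_mult : forall i, is_multiplicity (S i) (mu i))
  (S_frob : forall i, is_frobenius (S i) (fr i)) (fr_lt : forall i, fr i < 3 * mu i).

Local Notation N := (3 * g.+1).

Lemma mu_le i : mu i <= g.+1.
Proof. exact: mult_le_genusS (S_genus i) (S_mult i). Qed.

Lemma gap_lt_N i x : ~~ S i x -> x < N.
Proof.
by move=> Sx; have := gap_le_frob (S_frob i) Sx; have := fr_lt i; have := mu_le i; lia.
Qed.

Lemma card_gaps i : #|gap_set N (S i)| = g.
Proof. exact: card_gap_set (S_genus i) (@gap_lt_N i). Qed.

Lemma gap_set_inj : injective (fun i => gap_set N (S i)).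
Proof.
move=> i j /setP gaps_eq; apply: S_inj; apply: functional_extensionality => x.
have [x_lt|x_ge] := ltnP x N.
  by have := gaps_eq (Ordinal x_lt); rewrite !inE => /negb_inj.
have gap_ge x' k : N <= x' -> S k x' by move=> ?; apply/negPn/negP => /gap_lt_N; lia.
by rewrite !gap_ge.
Qed.

Lemma card_frob_lt_2mult : #|[set i | fr i < 2 * mu i]| <= fib g.+1.
Proof.
rewrite (card_sum_fibers_nat (h := mu) (B := g.+2)) => [|i _]; last by rewrite ltnS mu_le.
apply: (@leq_trans (\sum_(m < g.+2) 'C(m.-1, g - m.-1) * (m.-1 <= g))).
  apply: leq_sum => m _; have := ltn_ord m; rewrite ltnS => m_le.
  have := card_sets_between (C := [set i in [set i | fr i < 2 * mu i] | mu i == m])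
    (F := window N 1 m.-1 xpredT) (W := window N m.+1 m.-1 xpredT) gap_set_inj card_gaps.
  rewrite !card_window_full; try lia; apply.
    by apply/pred0P => x; rewrite /= !inE; lia.
  move=> i; rewrite !inE => /andP[fr_lt2 /eqP <-].
  exact: gap_set_frob_lt_2mult (S_sg i) (S_mult i) (S_frob i) fr_lt2.
rewrite big_ord_recl bin0n subn0 eqn0Ngt g_gt0 add0n.
exact: sum_binomial_antidiag_le_fib.
Qed.

Definition excess i := fr i - 2 * mu i.

Lemma excess_bounds i : 2 * mu i <= fr i ->
  [/\ fr i = mu i + mu i + excess i, 0 < excess i, excess i < mu i & excess i < g].
Proof.
move=> fr_ge; have fr_eq : fr i = mu i + mu i + excess i by rewrite /excess; lia.
have [m_gt0 Sm _] := S_mult i; have [Sf _] := S_frob i.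
have excess_gt0 : 0 < excess i.
  rewrite lt0n; apply: contraNneq Sf => excess0.
  by rewrite fr_eq excess0 addn0 (numerical_semigroup_add (S_sg i)).
have excess_lt : excess i < mu i by have := fr_lt i; rewrite /excess; lia.
split=> //.
have := subset_leq_card (forced_gaps_sub N (S_sg i) (S_mult i) (S_frob i) fr_eq excess_lt).
by rewrite card_gaps card_forced_gaps //; [lia | have := mu_le i; lia].
Qed.

Lemma card_excess_class_le k (A : {set 'I_k}) m (C : {set 'I_n}) :
  (forall i, i \in C ->
     [/\ 2 * mu i <= fr i, excess i = k, shifted_trace k (S i) (mu i) = A & mu i = m]) ->
  ~~ in_sumset A k ->
  #|C| <= (k < m) * ('C(m.-1 - sumset_card A, g - (m.-1 + (k - #|A|)).+2)
                    * ((m.-1 + (k - #|A|)).+2 <= g)).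
Proof.
move=> C_class Ak; have [->|[i0 i0C]] := set_0Vmem C; first by rewrite cards0.
have [fr_ge0 k_eq _ m_eq] := C_class i0 i0C.
have km : k < m by have [_ _] := excess_bounds fr_ge0; rewrite k_eq m_eq.
have m_gt0 : 0 < m by rewrite -m_eq; case: (S_mult i0).
rewrite km mul1n.
apply: leq_trans (card_sets_between gap_set_inj card_gaps
  (forced_optional_disjoint N A km) _) _.
  move=> i /C_class[fr_ge k_eq' <- m_eq']; clear k_eq m_eq; subst k m.
  have [fr_eq _ km' _] := excess_bounds fr_ge.
  split.
  - exact (forced_gaps_sub N (S_sg i) (S_mult i) (S_frob i) fr_eq km').
  - exact (gap_set_sub_forced_optional N (S_sg i) (S_mult i) (S_frob i) fr_eq).
have N_bound : m + m + k < N by have := mu_le i0; rewrite m_eq; lia.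
rewrite card_forced_gaps // leq_mul2r leq_bin2l ?orbT //.
by apply: card_optional_gaps_le; lia.
Qed.

Lemma card_trace_class_le k (A : {set 'I_k}) (C : {set 'I_n}) :
  (forall i, i \in C ->
     [/\ 2 * mu i <= fr i, excess i = k & shifted_trace k (S i) (mu i) = A]) ->
  in_calA A -> #|C| <= fibz (g%:Z - (sumset_card A)%:Z + #|A|%:Z - k%:Z - 1)%R.
Proof.
move=> C_class /andP[_ Ak].
have A_le : #|A| <= k by rewrite -[k in _ <= k]card_ord max_card.
have sumset_le : sumset_card A <= k by rewrite sumset_card_sum //; apply: sum_bool_le.
apply: leq_trans (sum_class_counts_le_fibz g A_le sumset_le).
rewrite (card_sum_fibers_nat (h := mu) (B := g.+2)) => [|i _]; last by rewrite ltnS mu_le.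
apply: leq_sum => m _; apply: card_excess_class_le => // i.
by rewrite inE => /andP[/C_class[? ? ?] /eqP].
Qed.

Lemma card_frob_gt_2mult :
  #|[set i | ~~ (fr i < 2 * mu i)]| <= \sum_(1 <= k < g) \sum_(A : {set 'I_k} | in_calA A)
     fibz (g%:Z - (sumset_card A)%:Z + #|A|%:Z - k%:Z - 1)%R.
Proof.
rewrite (card_sum_fibers_nat (h := excess) (B := g)) => [|i]; last first.
  by rewrite inE -leqNgt => /excess_bounds[].
rewrite -(big_mkord xpredT (fun k => #|[set i in _ | excess i == k]|)) (big_ltn g_gt0).
rewrite [X in X + _](_ : _ = 0) ?add0n; last first.
  apply/eqP; rewrite cards_eq0; apply/eqP/setP => i; rewrite !inE.
  by apply/negP => /andP[]; rewrite -leqNgt => /excess_bounds[_ /lt0n_neq0/negbTE ->].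
apply: leq_sum => k _.
rewrite (card_sum_fibers _ (fun i => shifted_trace k (S i) (mu i))) [X in _ <= X]big_mkcond.
apply: leq_sum => A _; case: ifP => A_calA.
  apply: card_trace_class_le => // i.
  by rewrite !inE -leqNgt => /andP[/andP[? /eqP ?] /eqP].
rewrite leqn0 cards_eq0; apply/eqP/setP => i; rewrite !inE; apply/negP.
rewrite -leqNgt => /andP[/andP[fr_ge /eqP k_eq] /eqP A_eq]; subst k A.
have [fr_eq excess_gt0 _ _] := excess_bounds fr_ge.
by rewrite (shifted_trace_in_calA (S_sg i) (S_mult i) (S_frob i) fr_eq excess_gt0) in A_calA.
Qed.

Lemma card_family_le_bound_rhs : n <= bound_rhs g.
Proof.
rewrite -[n]card_ord -(cardsC [set i | fr i < 2 * mu i]); apply: leq_add.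
  exact: card_frob_lt_2mult.
rewrite (_ : ~: _ = [set i | ~~ (fr i < 2 * mu i)]) ?card_frob_gt_2mult //.
by apply/setP => i; rewrite !inE.
Qed.

End SemigroupFamily.

Theorem lemma3p9 (g : nat) (hg : 0 < g) :
  forall (n : nat) (S : 'I_n -> nat -> bool),
    injective S ->
    (forall i, numerical_semigroup (S i) /\ has_genus (S i) g /\
       exists m f, [/\ is_multiplicity (S i) m, is_frobenius (S i) f & f < 3 * m]) ->
    n <= bound_rhs g.
Proof.
move=> n S S_inj S_prop.
have mult_frob i : {p : nat * nat | [/\ is_multiplicity (S i) p.1,
    is_frobenius (S i) p.2 & p.2 < 3 * p.1]}.
  apply: constructive_indefinite_description.
  by have [_ [_ [m [f ?]]]] := S_prop i; exists (m, f).
apply: (@card_family_le_bound_rhs g n S (fun i => (sval (mult_frob i)).1)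
          (fun i => (sval (mult_frob i)).2)) => // i.
- by case: (S_prop i).
- by case: (S_prop i) => _ [].
- by case: (svalP (mult_frob i)).
- by case: (svalP (mult_frob i)).
- by case: (svalP (mult_frob i)).
Qed.
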